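(* With the notation below, let $D=D_+-D_-\in\mathrm{Div}(C_p)$ with $D_\pm$ effective, and let $(h_i,\mu_i)$, $(h'_j,\mu'_j)$ be finite families in $H_p^+\times\mathbb{R}_+^*$ with $D_+=\sum_i\delta(h_i,\mu_i)$ and $D_-=\sum_j\delta(h'_j,\mu'_j)$. Assume $\deg(D)=0$ and that $h\in H_p$ satisfies $(p-1)h=\sum_ih_i-\sum_jh'_j$. Then the function $f(\lambda)=\sum_i\Theta_{h_i,\mu_i}(\lambda)-\sum_j\Theta_{h'_j,\mu'_j}(\lambda)-h\lambda$ is continuous, piecewise affine with slopes in $H_p$, satisfies $f(p\lambda)=f(\lambda)$ for all $\lambda\in\mathbb{R}_+^*$, and its principal divisor is $(f)=D$.
   Context: Let $p$ be a prime, $H_p=\mathbb{Z}[1/p]$, $H_p^+=H_p\cap(0,\infty)$. $C_p$ is the set of subgroups $H=\lambda H_p\subset\mathbb{R}$, $\lambda>0$. A divisor $D$ on $C_p$ assigns $D(H)\in H$ to each $H\in C_p$, zero for all but finitely many $H$; divisors form the group $\mathrm{Div}(C_p)$; $D$ is effective if $D(H)\geq0$ for all $H$; $\deg(D)=\sum_HD(H)$. For $h\in H_p^+$, $\mu>0$, $\delta(h,\mu)$ is the divisor supported at $\mu h^{-1}H_p$ with value $\mu$ there. For a continuous piecewise affine $f$ on $(0,\infty)$ with slopes in $H_p$ and $f(p\lambda)=f(\lambda)$, the order at $H=\lambda H_p$ is $\mathrm{Ord}_H(f)=h_+-h_-$, $h_\pm=\lim_{\epsilon\to0\pm}(f((1+\epsilon)\lambda)-f(\lambda))/\epsilon$,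 and $(f)(H)=\mathrm{Ord}_H(f)$. Let $\theta(\lambda)=\sum_{m\geq0}\max(0,1-p^m\lambda)+\sum_{m\geq1}\max(0,p^{-m}\lambda-1)$ and $\Theta_{h,\mu}(\lambda)=\mu\,\theta(\mu^{-1}h\lambda)$. *)

From HB Require Import structures.
From mathcomp Require Import all_boot all_order all_algebra.
From mathcomp Require Import all_classical all_reals all_analysis.
Set Implicit Arguments. Unset Strict Implicit. Unset Printing Implicit Defensive.
Import Order.TTheory GRing.Theory Num.Theory.
Import numFieldNormedType.Exports.
Local Open Scope classical_set_scope.
Local Open Scope ring_scope.

Section Defs.
Variables (R : realType) (p : nat).

Definition Hp : set R :=
  [set x | exists (z : int) (k : nat), x = z%:~R / (p%:R) ^+ k].

Definition Hp_pos : set R := [set x | Hp x /\ 0 < x].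

Definition scaleHp (l : R) : set R := [set l * x | x in Hp].

Definition Cp : set (set R) := [set H | exists l, 0 < l /\ H = scaleHp l].

Definition divisor_supp (D : set R -> R) : set (set R) :=
  [set H | Cp H /\ D H != 0].

Definition is_divisor (D : set R -> R) : Prop :=
  (forall H, Cp H -> H (D H)) /\
  (forall H, ~ Cp H -> D H = 0) /\
  finite_set (divisor_supp D).

Definition effective (D : set R -> R) : Prop := forall H, Cp H -> 0 <= D H.

Definition deg (D : set R -> R) : R := \sum_(H \in divisor_supp D) D H.

Definition delta (h mu : R) : set R -> R :=
  fun H => if `[< H = scaleHp (mu / h) >] then mu else 0.

Definition theta (l : R) : R :=
  limn (fun N => \sum_(0 <= m < N) Num.max 0 (1 - (p%:R) ^+ m * l))
  + limn (fun N => \sum_(1 <= m < N) Num.max 0 (l / (p%:R) ^+ m - 1)).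

Definition Theta (h mu : R) (l : R) : R := mu * theta (h * l / mu).

Definition pw_affine_Hp (f : R -> R) : Prop :=
  forall a b, 0 < a -> a < b ->
  exists (n : nat) (x s c : nat -> R),
    [/\ x 0%N = a, x n = b,
        (forall i, (i < n)%N -> x i < x i.+1) &
        (forall i, (i < n)%N -> Hp (s i) /\
           forall y, x i <= y <= x i.+1 -> f y = s i * y + c i)].

(* Ord_H(f) at H = lambda H_p: the one-sided limits h_+ and h_- exist and
   Ord = h_+ - h_- *)
Definition has_order_at (f : R -> R) (l o : R) : Prop :=
  exists hplus hminus : R,
    [/\ (fun e => (f ((1 + e) * l) - f l) / e) @ at_right 0 --> hplus,
        (fun e => (f ((1 + e) * l) - f l) / e) @ at_left 0 --> hminus &
        o = hplus - hminus].

End Defs.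

From HB Require Import structures.
From mathcomp Require Import all_boot all_order all_algebra.
From mathcomp Require Import all_classical all_reals all_analysis.
From mathcomp Require Import ring lra zify.
Import Order.TTheory GRing.Theory Num.Theory.
Import numFieldNormedType.Exports.
Local Open Scope classical_set_scope.
Local Open Scope ring_scope.

(* On a compact subinterval of (0, oo) only finitely many terms of theta are
   nonzero, so there Theta_{h,mu} is a finite sum of kinks
   y |-> mu * max(0, a y + b) whose slopes mu a = -p^m h or h / p^m lie in H_p.
   Kinks are continuous and piecewise affine, and the order of a kink at l is
   |b| if l is its root and 0 otherwise; the roots of the kinks of
   Theta_{h,mu} are the points mu h^-1 p^k, each carrying order mu, so the
   order of Theta_{h,mu} at l is delta(h, mu)(l H_p).  Periodicity follows
   from theta(p x) = theta(x) + x - 1: it gives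
   f(p l) - f(l) = (sum h_i - sum h'_j - (p - 1) h) l - (sum mu_i - sum mu'_j),
   and sum mu_i - sum mu'_j = deg D = 0. *)

(** * Orders of piecewise affine functions *)

Section Order.
Context {R : realType}.
Implicit Types (f g : R -> R) (a b c l o s t : R).

Definition kink a b (y : R) := Num.max 0 (a * y + b).

Lemma has_order_at_near_cst f l hp hm :
  (\forall e \near 0^'+, (f ((1 + e) * l) - f l) / e = hp) ->
  (\forall e \near 0^'-, (f ((1 + e) * l) - f l) / e = hm) ->
  has_order_at f l (hp - hm).
Proof. by move=> Ep Em; exists hp, hm; split => //; apply: cvg_near_cst. Qed.

Lemma has_order_at_affine s t l : has_order_at (fun y => s * y + t) l 0.
Proof.
rewrite -(subrr (s * l)); apply: has_order_at_near_cst; near=> e.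
- have e_gt0 : 0 < e by near: e; exact: nbhs_right_gt.
  by field; rewrite gt_eqF.
- have e_lt0 : e < 0 by near: e; exact: nbhs_left_lt.
  by field; rewrite lt_eqF.
Unshelve. all: by end_near.
Qed.

Lemma has_order_at_near {f g l o} : (\forall y \near l, f y = g y) ->
  has_order_at g l o -> has_order_at f l o.
Proof.
move=> fg [hp [hm [Ghp Ghm ->]]]; exists hp, hm.
have fgl : f l = g l := nbhs_singleton fg.
have shift : (fun e => (1 + e) * l) @ 0 --> (1 + 0) * l.
  by apply: cvgMl; apply: cvgD; [exact: cvg_cst | exact: cvg_id].
rewrite addr0 mul1r in shift.
have dq_near : \forall e \near 0, (g ((1 + e) * l) - g l) / e = (f ((1 + e) * l) - f l) / e.
  have fg_shift : \forall e \near 0, f ((1 + e) * l) = g ((1 + e) * l) := shift _ fg.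
  by apply: filterS fg_shift => e ->; rewrite fgl.
by split=> //; [apply: cvg_trans Ghp | apply: cvg_trans Ghm];
  exact/near_eq_cvg/cvg_within.
Qed.

Lemma has_order_atD {f g l o1 o2} : has_order_at f l o1 -> has_order_at g l o2 ->
  has_order_at (fun y => f y + g y) l (o1 + o2).
Proof.
move=> [hp1 [hm1 [P1 M1 ->]]] [hp2 [hm2 [P2 M2 ->]]].
exists (hp1 + hp2), (hm1 + hm2); split; last by ring.
- by under eq_fun do rewrite opprD addrACA mulrDl; exact: cvgD.
- by under eq_fun do rewrite opprD addrACA mulrDl; exact: cvgD.
Qed.

Lemma has_order_atB {f g l o1 o2} : has_order_at f l o1 -> has_order_at g l o2 ->
  has_order_at (fun y => f y - g y) l (o1 - o2).
Proof.
move=> [hp1 [hm1 [P1 M1 ->]]] [hp2 [hm2 [P2 M2 ->]]].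
exists (hp1 - hp2), (hm1 - hm2); split; last by ring.
- by under eq_fun do rewrite opprD addrACA -opprD mulrBl; exact: (cvgB P1 P2).
- by under eq_fun do rewrite opprD addrACA -opprD mulrBl; exact: (cvgB M1 M2).
Qed.

Lemma has_order_atMl c {f l o} : has_order_at f l o ->
  has_order_at (fun y => c * f y) l (c * o).
Proof.
move=> [hp [hm [Pf Mf ->]]]; exists (c * hp), (c * hm); split; last by ring.
- by under eq_fun do rewrite -mulrBr -mulrA; exact: cvgMr.
- by under eq_fun do rewrite -mulrBr -mulrA; exact: cvgMr.
Qed.

Lemma has_order_at_sum {I : Type} (r : seq I) {F : I -> R -> R} {O : I -> R} {l} :
  (forall i, has_order_at (F i) l (O i)) ->
  has_order_at (fun y => \sum_(i <- r) F i y) l (\sum_(i <- r) O i).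
Proof.
move=> FO; elim: r => [|i r IHr].
  rewrite [X in has_order_at _ _ X]big_nil.
  apply: has_order_at_near (has_order_at_affine 0 0 l).
  by near=> y; rewrite big_nil mul0r addr0.
rewrite [X in has_order_at _ _ X]big_cons.
apply: has_order_at_near (has_order_atD (FO i) IHr).
by near=> y; rewrite big_cons.
Unshelve. all: by end_near.
Qed.

Lemma continuous_affine s t : continuous (fun y => s * y + t).
Proof. by move=> l; apply: cvgD; [apply: cvgMr; exact: cvg_id | exact: cvg_cst]. Qed.

Lemma continuous_sum (I : Type) (r : seq I) (F : I -> R -> R) :
  (forall i, continuous (F i)) -> continuous (fun y => \sum_(i <- r) F i y).
Proof. by move=> Fc; apply: continuous_big => //; exact: add_continuous. Qed.

Lemma has_order_at_kink a b l :
  has_order_at (kink a b) l (if a * l + b == 0 then `|b| else 0).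
Proof.
have affine_near := continuous_affine a b l.
case: ltgtP => [neg|pos|root].
- apply: has_order_at_near (has_order_at_affine 0 0 l).
  near=> y; rewrite mul0r addr0; apply/max_idPl/ltW.
  by near: y; exact: cvgr_lt affine_near _ neg.
- apply: has_order_at_near (has_order_at_affine a b l).
  near=> y; apply/max_idPr/ltW.
  by near: y; exact: cvgr_gt affine_near _ pos.
(* At the root the one-sided difference quotients are max(0, al) and min(0, al). *)
have dqE e : (kink a b ((1 + e) * l) - kink a b l) / e = Num.max 0 (a * l * e) / e.
  by rewrite /kink root maxxx subr0; congr (Num.max 0 _ / e); lra.
have -> : `|b| = Num.max 0 (a * l) - Num.min 0 (a * l).
  rewrite -normrN (_ : - b = a * l); last by lra.
  by case: (lerP 0 (a * l)) => al; [rewrite ger0_norm // subr0 | rewrite ltr0_norm // sub0r];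
     rewrite ?(max_idPr al) ?(min_idPl al) ?(max_idPl (ltW al)) ?(min_idPr (ltW al)).
apply: has_order_at_near_cst; near=> e; rewrite dqE.
- have e_gt0 : 0 < e by near: e; exact: nbhs_right_gt.
  have -> : Num.max 0 (a * l * e) = e * Num.max 0 (a * l).
    by rewrite maxr_pMr ?ltW // mulr0 mulrC.
  by field; rewrite gt_eqF.
- have e_lt0 : e < 0 by near: e; exact: nbhs_left_lt.
  have -> : Num.max 0 (a * l * e) = e * Num.min 0 (a * l).
    by rewrite minr_nMr ?ltW // mulr0 mulrC.
  by field; rewrite lt_eqF.
Unshelve. all: by end_near.
Qed.

Lemma continuous_kink a b : continuous (kink a b).
Proof.
move=> l; apply: (@continuous_max R R (fun=> 0) (fun y => a * y + b) l).
  exact: cvg_cst.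
exact: continuous_affine.
Qed.

End Order.

(** * Arithmetic of H_p *)

Section Hp.
Context {R : realType} {p : nat}.
Hypothesis p_gt1 : (1 < p)%N.
Local Notation P := (p%:R : R).

Lemma P_gt1 : 1 < P.
Proof. by rewrite ltr1n. Qed.

Lemma P_gt0 : 0 < P.
Proof. exact: lt_trans ltr01 P_gt1. Qed.

Lemma pX_gt0 k : 0 < P ^+ k.
Proof. by rewrite exprn_gt0 // P_gt0. Qed.

Lemma ler_pX m n : (m <= n)%N -> P ^+ m <= P ^+ n.
Proof. by move=> mn; rewrite (ler_eXn2l P_gt1). Qed.

Lemma pX_neq0 k : P ^+ k != 0.
Proof. by rewrite gt_eqF ?pX_gt0. Qed.

Lemma exists_pX_gt (x : R) : exists N, x < P ^+ N.
Proof.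
have [x_le0|x_gt0] := lerP x 0; first by exists 0%N; rewrite expr0 (le_lt_trans x_le0).
exists (Num.Def.archi_bound x); apply: lt_le_trans (archi_boundP (ltW x_gt0)) _.
by rewrite -natrX ler_nat ltnW // ltn_expl.
Qed.

Lemma Hp_int (z : int) : Hp p (z%:~R : R).
Proof. by exists z, 0%N; rewrite expr0 divr1. Qed.

Lemma HpN (x : R) : Hp p x -> Hp p (- x).
Proof. by move=> [z [k ->]]; exists (- z), k; rewrite mulrNz mulNr. Qed.

Lemma HpD (x y : R) : Hp p x -> Hp p y -> Hp p (x + y).
Proof.
move=> [z [k ->]] [w [j ->]]; exists (z * (p%:Z) ^+ j + w * (p%:Z) ^+ k), (k + j)%N.
rewrite intrD !intrM !rmorphXn /= !pmulrn exprD.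
by field; rewrite !pX_neq0.
Qed.

Lemma HpM (x y : R) : Hp p x -> Hp p y -> Hp p (x * y).
Proof.
move=> [z [k ->]] [w [j ->]]; exists (z * w), (k + j)%N.
by rewrite intrM exprD; field; rewrite !pX_neq0.
Qed.

Lemma HpX k : Hp p (P ^+ k).
Proof. by have := Hp_int (p%:Z ^+ k); rewrite rmorphXn /= pmulrn. Qed.

Lemma HpVX k : Hp p (P ^+ k)^-1.
Proof. by exists 1, k; rewrite div1r. Qed.

Lemma HpXz (k : int) : Hp p (P ^ k).
Proof. by case: k => k; [exact: HpX | exact: HpVX]. Qed.

Lemma Hp_unit_pX (u : R) : prime p -> 0 < u -> Hp p u -> Hp p u^-1 ->
  exists k : int, u = P ^ k.
Proof.
move=> pr_p u_gt0 [z [a uE]] [w [b uVE]].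
have int_pos (v : int) c : 0 < v%:~R / P ^+ c -> exists n : nat, v = n%:Z.
  rewrite pmulr_lgt0 ?invr_gt0 ?pX_gt0 // ltr0z.
  by case: v => // n _; exists n.
have [n1 zE] : exists n : nat, z = n%:Z by apply: (int_pos _ a); rewrite -uE.
have [n2 wE] : exists n : nat, w = n%:Z.
  by apply: (int_pos _ b); rewrite -uVE invr_gt0.
rewrite {}zE in uE; rewrite {}wE in uVE.
(* Multiplying u = n1 / p^a by u^-1 = n2 / p^b gives n1 * n2 = p^(a + b). *)
have n1n2E : (n1 * n2)%N = (p ^ (a + b))%N.
  apply/eqP; rewrite -(eqr_nat R) natrM natrX exprD; apply/eqP.
  have := divff (lt0r_neq0 u_gt0); rewrite {1}uE uVE -!pmulrn => uuV.
  move/(congr1 ( *%R^~ (P ^+ a * P ^+ b))): uuV; rewrite mul1r => <-.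
  by field; rewrite !pX_neq0.
have [j _ n1E] : exists2 j, (j <= a + b)%N & n1 = (p ^ j)%N.
  by apply/(dvdn_pfactor _ _ pr_p); rewrite -n1n2E dvdn_mulr.
exists (j%:Z - a%:Z); rewrite expfzDr ?gt_eqF ?P_gt0 //.
by rewrite -exprnN uE n1E -pmulrn natrX.
Qed.

Lemma scaleHpE (l y : R) : l != 0 -> scaleHp p l y <-> Hp p (y / l).
Proof.
move=> l_neq0; split => [[x Hpx <-]|Hpyl]; first by rewrite mulrAC divff // mul1r.
by exists (y / l) => //; rewrite mulrC divfK.
Qed.

Lemma scaleHp_eq (l c : R) : prime p -> 0 < l -> 0 < c ->
  scaleHp p l = scaleHp p c <-> exists k : int, l = c * P ^ k.
Proof.
move=> pr_p l_gt0 c_gt0; have [l_neq0 c_neq0] := (lt0r_neq0 l_gt0, lt0r_neq0 c_gt0).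
have Hp1 : Hp p (1 : R) := Hp_int 1.
split => [lc|[k lE]].
  have Hp_lc : Hp p (l / c) by apply/scaleHpE => //; rewrite -lc; apply/scaleHpE; rewrite ?divff.
  have Hp_cl : Hp p (c / l) by apply/scaleHpE => //; rewrite lc; apply/scaleHpE; rewrite ?divff.
  have [|k lcE] := Hp_unit_pX _ pr_p (divr_gt0 l_gt0 c_gt0) Hp_lc; first by rewrite invf_div.
  by exists k; rewrite -lcE mulrC divfK.
have pk_neq0 : P ^ k != 0 by rewrite expfz_neq0 ?lt0r_neq0 ?P_gt0.
apply/seteqP; split => y /scaleHpE Hpy; apply/scaleHpE => //.
  have -> : y / c = y / l * P ^ k by rewrite lE; field; rewrite pk_neq0 c_neq0.
  by apply: HpM; [exact: Hpy | exact: HpXz].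
have -> : y / l = y / c * P ^ (- k) by rewrite lE -invr_expz; field; rewrite pk_neq0 c_neq0.
by apply: HpM; [exact: Hpy | exact: HpXz].
Qed.

(** * Piecewise affine functions with slopes in H_p *)

(* [pw_affine_Hp p f] unfolds to [pw_affine_Hp_on p f a b] for all [0 < a < b]. *)
Definition affine_Hp_on (f : R -> R) (u v : R) :=
  exists s c, Hp p s /\ forall y, u <= y <= v -> f y = s * y + c.

Definition pw_affine_Hp_on (f : R -> R) (a b : R) :=
  exists (n : nat) (x s c : nat -> R),
    [/\ x 0%N = a, x n = b,
        (forall i, (i < n)%N -> x i < x i.+1) &
        (forall i, (i < n)%N -> Hp p (s i) /\
           forall y, x i <= y <= x i.+1 -> f y = s i * y + c i)].

Definition affine_Hp_off (f : R -> R) (a b : R) (K : seq R) :=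
  forall u v, a <= u -> u < v -> v <= b -> ~~ has (fun k => u < k < v) K ->
  affine_Hp_on f u v.

Lemma pw_affine_Hp_on_cat {f a k b} : a < k -> k < b ->
  pw_affine_Hp_on f a k -> pw_affine_Hp_on f k b -> pw_affine_Hp_on f a b.
Proof.
move=> ak kb [n1 [x1 [s1 [c1 [x10 x1n x1i x1p]]]]] [n2 [x2 [s2 [c2 [x20 x2n x2i x2p]]]]].
have n1_gt0 : (0 < n1)%N by case: n1 x1n {x1i x1p} => // x1k; move: ak; rewrite -x10 x1k ltxx.
pose glue (F1 F2 : nat -> R) i := if (i < n1)%N then F1 i else F2 (i - n1)%N.
have glueL F1 F2 i : (i < n1)%N -> glue F1 F2 i = F1 i by rewrite /glue => ->.
have glueR F1 F2 i : (n1 <= i)%N -> glue F1 F2 i = F2 (i - n1)%N.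
  by rewrite /glue ltnNge => ->.
have glueS i : (i < n1)%N -> glue x1 x2 i.+1 = x1 i.+1.
  move=> lt_in1; rewrite /glue; case: ltnP => // le_n1i.
  have -> : i.+1 = n1 by lia.
  by rewrite subnn x20 x1n.
exists (n1 + n2)%N, (glue x1 x2), (glue s1 s2), (glue c1 c2); split.
- by rewrite glueL.
- by rewrite glueR ?leq_addr // addKn.
- move=> i lt_in; case: (ltnP i n1) => [lt_in1|le_n1i]; first by rewrite glueL ?glueS ?x1i.
  by rewrite !glueR ?subSn // ?x2i //; lia.
- move=> i lt_in; case: (ltnP i n1) => [lt_in1|le_n1i].
    by rewrite glueS // !glueL //; exact: x1p.
  by rewrite !glueR ?subSn //; [apply: x2p | ..]; lia.
Qed.

Lemma pw_affine_Hp_on_off {f a b K} : a < b -> affine_Hp_off f a b K -> pw_affine_Hp_on f a b.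
Proof.
elim: K a b => [|k K IHK] a b ab fK.
  have [s [c [Hps fE]]] : affine_Hp_on f a b by apply: fK; rewrite ?lexx.
  exists 1%N, (fun i => if i == 0%N then a else b), (fun=> s), (fun=> c).
  by split => // i; rewrite ltnS leqn0 => /eqP ->.
have restrict u v : a <= u -> v <= b -> ~~ (u < k < v) -> affine_Hp_off f u v K.
  move=> au vb kuv u' v' uu' u'v' v'v noK; apply: fK; rewrite ?(le_trans au) ?(le_trans v'v) //=.
  by rewrite negb_or noK andbT; apply: contra kuv => /andP[? ?]; apply/andP; split; lra.
have [/andP[ak kb]|k_out] := boolP (a < k < b); last first.
  by apply: IHK => //; apply: restrict; rewrite ?lexx.
apply: (pw_affine_Hp_on_cat ak kb); apply: IHK => //; apply: restrict;
  by rewrite ?lexx ?ltxx ?andbF ?(ltW ak) ?(ltW kb).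
Qed.

Lemma affine_Hp_off_eq {f g a b K} : (forall y, a <= y <= b -> f y = g y) ->
  affine_Hp_off g a b K -> affine_Hp_off f a b K.
Proof.
move=> fg gK u v au uv vb noK; have [s [c [Hps gE]]] := gK u v au uv vb noK.
exists s, c; split => // y /andP[uy yv].
by rewrite fg ?gE ?uy ?yv // (le_trans au uy) (le_trans yv vb).
Qed.

Lemma affine_Hp_offD {f g a b K1 K2} : affine_Hp_off f a b K1 -> affine_Hp_off g a b K2 ->
  affine_Hp_off (fun y => f y + g y) a b (K1 ++ K2).
Proof.
move=> fK gK u v au uv vb; rewrite has_cat negb_or => /andP[noK1 noK2].
have [s1 [c1 [Hps1 fE]]] := fK u v au uv vb noK1.
have [s2 [c2 [Hps2 gE]]] := gK u v au uv vb noK2.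
exists (s1 + s2), (c1 + c2); split; first exact: HpD.
by move=> y yuv; rewrite fE ?gE //; ring.
Qed.

Lemma affine_Hp_offB {f g a b K1 K2} : affine_Hp_off f a b K1 -> affine_Hp_off g a b K2 ->
  affine_Hp_off (fun y => f y - g y) a b (K1 ++ K2).
Proof.
move=> fK gK u v au uv vb; rewrite has_cat negb_or => /andP[noK1 noK2].
have [s1 [c1 [Hps1 fE]]] := fK u v au uv vb noK1.
have [s2 [c2 [Hps2 gE]]] := gK u v au uv vb noK2.
exists (s1 - s2), (c1 - c2); split; first by apply: HpD => //; exact: HpN.
by move=> y yuv; rewrite fE ?gE //; ring.
Qed.

Lemma affine_Hp_off_affine s t a b : Hp p s -> affine_Hp_off (fun y => s * y + t) a b [::].
Proof. by move=> Hps u v *; exists s, t. Qed.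

Lemma affine_Hp_off_sum (I : Type) (r : seq I) (F : I -> R -> R) a b :
  (forall i, exists K, affine_Hp_off (F i) a b K) ->
  exists K, affine_Hp_off (fun y => \sum_(i <- r) F i y) a b K.
Proof.
move=> FK; elim: r => [|i r [K IHr]].
  exists [::]; apply: affine_Hp_off_eq (affine_Hp_off_affine 0 0 a b (Hp_int 0)).
  by move=> y _; rewrite big_nil mul0r addr0.
have [Ki FiK] := FK i; exists (Ki ++ K).
by apply: affine_Hp_off_eq (affine_Hp_offD FiK IHr) => y _; rewrite big_cons.
Qed.

Lemma affine_Hp_off_kink g a0 b0 a b : Hp p (g * a0) ->
  affine_Hp_off (fun y => g * kink a0 b0 y) a b [:: - b0 / a0].
Proof.
move=> Hp_slope u v _ uv _; rewrite /= orbF => root_out.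
have [->|a0_neq0] := eqVneq a0 0.
  exists 0, (g * Num.max 0 b0); split; first exact: (Hp_int 0).
  by move=> y _; rewrite /kink mul0r add0r; ring.
have sign_const : (forall y, u <= y <= v -> 0 <= a0 * y + b0) \/
                  (forall y, u <= y <= v -> a0 * y + b0 <= 0).
  have root_E : a0 * (- b0 / a0) + b0 = 0 by field.
  move: root_out; rewrite negb_and -!leNgt.
  by case: (ltgtP a0 0) a0_neq0 => // a0_sgn _ /orP[] root_uv;
    [right | left | left | right] => y /andP[uy yv]; nra.
case: sign_const => sign_y.
  exists (g * a0), (g * b0); split => // y yuv.
  by rewrite /kink (max_idPr (sign_y y yuv)); ring.
exists 0, 0; split; first exact: (Hp_int 0).
by move=> y yuv; rewrite /kink (max_idPl (sign_y y yuv)); ring.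
Qed.

(** * Truncations of theta *)

Lemma limn_sum_stationary (u : nat -> R) a N :
  (forall m, (N <= m)%N -> u m = 0) ->
  limn (fun M => \sum_(a <= m < M) u m) = \sum_(a <= m < N) u m.
Proof.
move=> u_eq0; apply: cvg_lim => //; apply: cvg_near_cst; near=> M.
have NM : (N <= M)%N by near: M; exact: nbhs_infty_ge.
rewrite [RHS](big_nat_widen _ _ _ _ _ NM) [RHS]big_mkcond /=; apply: eq_bigr => m _.
by case: ltnP => // /u_eq0.
Unshelve. all: by end_near.
Qed.

Definition theta_trunc N (x : R) :=
  \sum_(0 <= m < N) Num.max 0 (1 - P ^+ m * x) + \sum_(1 <= m < N) Num.max 0 (x / P ^+ m - 1).

Lemma theta_truncE N x : 1 <= P ^+ N * x -> x <= P ^+ N -> theta p x = theta_trunc N x.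
Proof.
move=> lo hi; have x_ge0 : 0 <= x.
  by rewrite -(pmulr_rge0 _ (pX_gt0 N)) (le_trans ler01).
rewrite /theta (limn_sum_stationary _ _ N) ?(limn_sum_stationary _ _ N) //
  => m /ler_pX Nm; apply/max_idPl; rewrite subr_le0.
- by rewrite ler_pdivrMr ?pX_gt0 // mul1r (le_trans hi).
- by apply: le_trans lo _; rewrite ler_wpM2r.
Qed.

Lemma theta_trunc_mulp N x : theta_trunc N.+1 (P * x) = theta_trunc N.+1 x + (x - 1)
  + Num.max 0 (1 - P ^+ N.+1 * x) - Num.max 0 (x / P ^+ N - 1).
Proof.
pose A m := Num.max 0 (1 - P ^+ m * x); pose B m := Num.max 0 (x / P ^+ m - 1).
have sumA : \sum_(0 <= m < N.+1) Num.max 0 (1 - P ^+ m * (P * x))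
    = \sum_(0 <= m < N.+1) A m + A N.+1 - A 0%N.
  have E : \sum_(0 <= m < N.+2) A m = \sum_(0 <= m < N.+1) A m + A N.+1.
    by rewrite big_nat_recr.
  rewrite big_nat_recl // in E.
  have -> : \sum_(0 <= m < N.+1) Num.max 0 (1 - P ^+ m * (P * x)) = \sum_(0 <= m < N.+1) A m.+1.
    by apply: eq_bigr => m _; rewrite /A mulrA -exprSr.
  lra.
have sumB : \sum_(1 <= m < N.+1) Num.max 0 (P * x / P ^+ m - 1)
    = B 0%N + \sum_(1 <= m < N.+1) B m - B N.
  have E : \sum_(0 <= m < N.+1) B m = \sum_(0 <= m < N) B m + B N.
    by rewrite big_nat_recr.
  rewrite big_ltn // in E.
  have -> : \sum_(1 <= m < N.+1) Num.max 0 (P * x / P ^+ m - 1) = \sum_(0 <= m < N) B m.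
    rewrite big_add1 /=; apply: eq_bigr => m _; rewrite /B exprS.
    by congr (Num.max 0 (_ - 1)); field; rewrite pX_neq0 lt0r_neq0 ?P_gt0.
  lra.
have AB0 : B 0%N - A 0%N = x - 1.
  rewrite /A /B expr0 divr1 mul1r; case: (lerP x 1) => x1.
    by rewrite (max_idPl (_ : x - 1 <= 0)) 1?(max_idPr (_ : 0 <= 1 - x)); lra.
  by rewrite (max_idPr (_ : 0 <= x - 1)) 1?(max_idPl (_ : 1 - x <= 0)); lra.
rewrite /theta_trunc sumA sumB -/(A _) -/(B _); lra.
Qed.

Lemma theta_mulp x : 0 < x -> theta p (P * x) = theta p x + x - 1.
Proof.
move=> x_gt0; have [N /ltW le_N] := exists_pX_gt (x + x^-1).
have xV_gt0 : 0 < x^-1 by rewrite invr_gt0.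
have hi : x <= P ^+ N by lra.
have lo : 1 <= P ^+ N * x by rewrite -ler_pdivrMr // div1r; lra.
have loS : 1 <= P ^+ N.+1 * x.
  by apply: le_trans lo _; apply: ler_wpM2r; [exact: ltW | exact: ler_pX].
have loP : 1 <= P ^+ N.+1 * (P * x).
  by rewrite mulrCA; have := P_gt1; nra.
have hiP : P * x <= P ^+ N.+1 by rewrite exprS ler_pM2l ?P_gt0.
have hiS : x <= P ^+ N.+1 by apply: le_trans hi _; exact: ler_pX.
rewrite (theta_truncE _ _ loP hiP) (theta_truncE _ _ loS hiS) theta_trunc_mulp.
rewrite (max_idPl (_ : 1 - _ <= 0)) ?subr_le0 // (max_idPl (_ : x / _ - 1 <= 0)); first lra.
by rewrite subr_le0 ler_pdivrMr ?mul1r ?pX_gt0.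
Qed.

(* The two bounds make the level-[N] truncation of theta exact at [x], and they
   keep every kink root [x = p ^ k] since then [|k| < N]. *)
Definition in_window N (x : R) := 1 < P ^+ N * x /\ x < P ^+ N.

Lemma in_window_mono N N' x : (N <= N')%N -> in_window N x -> in_window N' x.
Proof.
move=> NN' [lo hi]; have x_gt0 : 0 < x by rewrite -(pmulr_rgt0 _ (pX_gt0 N)) (lt_trans ltr01).
split; first by apply: lt_le_trans lo _; rewrite ler_pM2r //; exact: ler_pX.
by apply: lt_le_trans hi _; exact: ler_pX.
Qed.

Lemma exists_window (cs : seq R) a b : 0 < a -> (forall c, c \in cs -> 0 < c) ->
  exists N, forall c y, c \in cs -> a <= y <= b -> in_window N (c * y).
Proof.
move=> a_gt0; elim: cs => [|c cs IHcs] cs_gt0; first by exists 0%N.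
have [N1 cN1] := exists_pX_gt (c * b + (c * a)^-1).
have [|N2 csN2] := IHcs; first by move=> c' c'cs; apply: cs_gt0; rewrite inE c'cs orbT.
exists (maxn N1 N2) => c' y; rewrite inE => /orP[/eqP->|c'cs] yab; last first.
  by apply: in_window_mono (csN2 _ _ c'cs yab); exact: leq_maxr.
apply: in_window_mono (leq_maxl N1 N2) _.
have c_gt0 : 0 < c by apply: cs_gt0; rewrite inE eqxx.
have [ay yb] : a <= y /\ y <= b by apply/andP.
have ca_gt0 : 0 < c * a by rewrite mulr_gt0.
have cy_ca : c * a <= c * y by rewrite ler_pM2l.
have cy_cb : c * y <= c * b by rewrite ler_pM2l.
have caV_gt0 : 0 < (c * a)^-1 by rewrite invr_gt0.
(* P^N1 exceeds both c y <= c b and 1 / (c y) <= 1 / (c a). *)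
split; last by lra.
rewrite -ltr_pdivrMr ?(lt_le_trans ca_gt0) // div1r.
apply: le_lt_trans (_ : (c * a)^-1 < P ^+ N1); last by lra.
by rewrite lef_pV2 ?posrE ?(lt_le_trans ca_gt0).
Qed.

Definition Theta_trunc N (h mu y : R) :=
  \sum_(0 <= m < N) mu * kink (- (P ^+ m * h / mu)) 1 y
  + \sum_(1 <= m < N) mu * kink (h / mu / P ^+ m) (-1) y.

Lemma Theta_truncE N h mu y : 0 < mu -> in_window N (h / mu * y) ->
  Theta p h mu y = Theta_trunc N h mu y.
Proof.
move=> mu_gt0 [lo hi]; rewrite /Theta mulrAC (theta_truncE N) ?ltW //.
rewrite /theta_trunc /Theta_trunc mulrDr !mulr_sumr.
by congr (_ + _); apply: eq_bigr => m _; rewrite /kink; congr (_ * Num.max 0 _);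
  field; rewrite ?pX_neq0 lt0r_neq0.
Qed.

Lemma continuous_Theta_trunc N h mu : continuous (Theta_trunc N h mu).
Proof.
by move=> y; apply: cvgD; apply: continuous_sum => m z; apply: cvgMr; exact: continuous_kink.
Qed.

Lemma affine_Hp_off_Theta_trunc N h mu a b : Hp p h -> 0 < mu ->
  exists K, affine_Hp_off (Theta_trunc N h mu) a b K.
Proof.
move=> Hph mu_gt0.
have kinks_off (A B : nat -> R) (r : seq nat) : (forall m, Hp p (mu * A m)) ->
    exists K, affine_Hp_off (fun y => \sum_(m <- r) mu * kink (A m) (B m) y) a b K.
  by move=> HpA; apply: affine_Hp_off_sum => m; eexists; exact: affine_Hp_off_kink.
have [m|K1 off1] := kinks_off (fun m => - (P ^+ m * h / mu)) (fun=> 1) (index_iota 0 N).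
  have -> : mu * - (P ^+ m * h / mu) = - (P ^+ m * h) by field; rewrite lt0r_neq0.
  by apply/HpN/HpM; [exact: HpX | exact: Hph].
have [m|K2 off2] := kinks_off (fun m => h / mu / P ^+ m) (fun=> -1) (index_iota 1 N).
  have -> : mu * (h / mu / P ^+ m) = h * (P ^+ m)^-1.
    by field; rewrite pX_neq0 lt0r_neq0.
  by apply: HpM; [exact: Hph | exact: HpVX].
by exists (K1 ++ K2); exact: affine_Hp_offD off1 off2.
Qed.

Lemma sum_nat_indicator (a b n : nat) : (a <= n < b)%N ->
  \sum_(a <= m < b) ((m == n)%:R : R) = 1.
Proof.
move=> nab; rewrite (bigD1_seq n) ?mem_index_iota ?iota_uniq //= eqxx big1 ?addr0 //.
by move=> m /negbTE ->.
Qed.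

Lemma sum_pX_indicator N x : in_window N x ->
  \sum_(0 <= m < N) ((P ^+ m * x == 1)%:R : R) + \sum_(1 <= m < N) ((x == P ^+ m)%:R : R)
  = (`[< exists k : int, x = P ^ k >])%:R.
Proof.
move=> [lo hi].
have PzI : injective (exprz P) := ieexprIz P_gt0 (negbT (gt_eqF P_gt1)).
case: asboolP => [[k xE]|no_pow]; last first.
  rewrite !big1 ?addr0 // => m _; apply/eqP; rewrite pnatr_eq0 eqb0; apply/eqP => E; apply: no_pow.
  - by exists m%:Z.
  - by exists (- m%:Z); rewrite -invr_expz; apply: (mulfI (pX_neq0 m)); rewrite E mulfV ?pX_neq0.
subst x; have pXz m : P ^+ m = P ^ m%:Z by [].
have k_bounds : (- N%:Z < k < N%:Z)%R.
  rewrite -!(ltr_eXz2l P_gt1) -pXz hi andbT.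
  by rewrite -invr_expz -pXz -div1r ltr_pdivrMr ?pX_gt0 // mulrC.
(* With x = p^k the first sum counts the m with k = -m, the second those with k = m. *)
have eq1E m : (P ^+ m * P ^ k == 1) = (m%:Z == - k).
  by rewrite pXz -expfzDr ?lt0r_neq0 ?P_gt0 // -[X in _ == X](expr0z P) (inj_eq PzI) addr_eq0.
have eqmE m : (P ^ k == P ^+ m) = (k == m%:Z) by rewrite pXz (inj_eq PzI).
under eq_bigr do rewrite eq1E.
under [X in _ + X = _]eq_bigr do rewrite eqmE.
case: (lerP k 0) => k_sgn.
- have [n kE] : exists n : nat, k = - n%:Z by exists `|k|%N; lia.
  rewrite [X in X + _](eq_bigr (fun m => ((m == n)%:R : R))) => [|m _]; last first.
    by rewrite kE opprK eqz_nat.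
  rewrite sum_nat_indicator; last lia.
  rewrite big_nat_cond big1 ?addr0 // => m /andP[/andP[m_ge1 _] _].
  by apply/eqP; rewrite pnatr_eq0 eqb0; apply/eqP; lia.
- have [n kE] : exists n : nat, k = n%:Z by exists `|k|%N; lia.
  rewrite [X in _ + X](eq_bigr (fun m => ((m == n)%:R : R))) => [|m _]; last first.
    by rewrite kE eqz_nat eq_sym.
  rewrite sum_nat_indicator; last lia.
  rewrite big_nat_cond big1 ?add0r // => m _.
  by apply/eqP; rewrite pnatr_eq0 eqb0; apply/eqP; lia.
Qed.

Lemma delta_scaleHp (h mu l : R) : prime p -> 0 < h -> 0 < mu -> 0 < l ->
  delta p h mu (scaleHp p l) = mu * (`[< exists k : int, h / mu * l = P ^ k >])%:R.
Proof.
move=> pr_p h_gt0 mu_gt0 l_gt0; rewrite /delta.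
suff -> : `[< scaleHp p l = scaleHp p (mu / h) >] = `[< exists k : int, h / mu * l = P ^ k >].
  by case: asboolP; rewrite ?mulr1 ?mulr0.
apply/asbool_equiv_eq; rewrite scaleHp_eq ?divr_gt0 //.
by split=> -[k kE]; exists k; move: kE; [move->|move<-]; field; rewrite !lt0r_neq0.
Qed.

Lemma has_order_at_Theta_trunc N (h mu l : R) : prime p -> 0 < h -> 0 < mu -> 0 < l ->
  in_window N (h / mu * l) -> has_order_at (Theta_trunc N h mu) l (delta p h mu (scaleHp p l)).
Proof.
move=> pr_p h_gt0 mu_gt0 l_gt0 window_l.
rewrite delta_scaleHp // -(sum_pX_indicator _ _ window_l) mulrDr !mulr_sumr.
apply: has_order_atD; apply: has_order_at_sum => m; apply: has_order_atMl.
- suff -> : ((P ^+ m * (h / mu * l) == 1)%:R : R)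
      = if - (P ^+ m * h / mu) * l + 1 == 0 then `|1| else 0 by exact: has_order_at_kink.
  by rewrite normr1 mulNr addrC subr_eq0 eq_sym !mulrA; case: eqP.
- suff -> : ((h / mu * l == P ^+ m)%:R : R)
      = if h / mu / P ^+ m * l + -1 == 0 then `|-1| else 0 by exact: has_order_at_kink.
  rewrite normrN normr1 subr_eq0 [_ / P ^+ m * l]mulrAC.
  have -> : (h / mu * l / P ^+ m == 1) = (h / mu * l == P ^+ m).
    apply/eqP/eqP => [E|->]; last by rewrite divff ?pX_neq0.
    by rewrite -(divfK (pX_neq0 m) (h / mu * l)) E mul1r.
  by case: eqP.
Qed.

Lemma Theta_mulp (h mu l : R) : 0 < h -> 0 < mu -> 0 < l ->
  Theta p h mu (P * l) = Theta p h mu l + h * l - mu.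
Proof.
move=> h_gt0 mu_gt0 l_gt0; rewrite /Theta (_ : h * (P * l) / mu = P * (h * l / mu)); last by ring.
rewrite theta_mulp ?divr_gt0 ?mulr_gt0 //.
by field; rewrite lt0r_neq0.
Qed.

End Hp.

Arguments theta_trunc {R} p N x.
Arguments affine_Hp_on {R} p f u v.
Arguments pw_affine_Hp_on {R} p f a b.
Arguments affine_Hp_off {R} p f a b K.
Arguments in_window {R} p N x.
Arguments Theta_trunc {R} p N h mu y.

(** * Degrees and the function f *)

Section Degree.
Context {R : realType} (p : nat).

Lemma deg_seq (D : set R -> R) (r : seq (set R)) :
  uniq r -> (forall H, H \in r -> Cp p H) -> (forall H, Cp p H -> D H != 0 -> H \in r) ->
  deg p D = \sum_(H <- r) D H.
Proof.
move=> r_uniq r_Cp supp_r; rewrite /deg (fsbig_fwiden r) //.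
  by move=> H [CpH DH]; exact: supp_r.
move=> H [/= Hr] /not_andP[]; first by move/(_ (r_Cp _ Hr)).
by move/negP; rewrite negbK => /eqP.
Qed.

Lemma sum_delta (r : seq (set R)) (h mu : R) : uniq r -> scaleHp p (mu / h) \in r ->
  \sum_(H <- r) delta p h mu H = mu.
Proof.
move=> r_uniq Hr; rewrite (bigD1_seq _ Hr r_uniq) /= /delta asboolT //.
by rewrite big1 ?addr0 // => H /eqP H_neq; rewrite asboolF.
Qed.

End Degree.

Section DivisorFunction.
Context {R : realType} (p : nat).
Hypothesis pr_p : prime p.
Local Notation P := (p%:R : R).
Let p_gt1 : (1 < p)%N := prime_gt1 pr_p.
Variables (n m : nat) (h mu : 'I_n -> R) (h' mu' : 'I_m -> R) (h0 : R).
Hypotheses (hpos : forall i, 0 < h i) (mupos : forall i, 0 < mu i).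
Hypotheses (hpos' : forall j, 0 < h' j) (mupos' : forall j, 0 < mu' j).

Definition delta_divisor (H : set R) :=
  \sum_(i < n) delta p (h i) (mu i) H - \sum_(j < m) delta p (h' j) (mu' j) H.

Definition divisor_fun (l : R) :=
  \sum_(i < n) Theta p (h i) (mu i) l - \sum_(j < m) Theta p (h' j) (mu' j) l - h0 * l.

Definition divisor_fun_trunc N (y : R) :=
  \sum_(i < n) Theta_trunc p N (h i) (mu i) y
  - \sum_(j < m) Theta_trunc p N (h' j) (mu' j) y - h0 * y.

Definition in_window_all N (y : R) :=
  (forall i, in_window p N (h i / mu i * y)) /\ (forall j, in_window p N (h' j / mu' j * y)).

Lemma deg_delta_divisor : deg p delta_divisor = \sum_(i < n) mu i - \sum_(j < m) mu' j.
Proof.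
pose r := undup ([seq scaleHp p (mu i / h i) | i <- index_enum 'I_n]
              ++ [seq scaleHp p (mu' j / h' j) | j <- index_enum 'I_m]).
have in_r1 i : scaleHp p (mu i / h i) \in r.
  by rewrite mem_undup mem_cat; apply/orP; left; apply/mapP; exists i; rewrite ?mem_index_enum.
have in_r2 j : scaleHp p (mu' j / h' j) \in r.
  by rewrite mem_undup mem_cat; apply/orP; right; apply/mapP; exists j; rewrite ?mem_index_enum.
rewrite (deg_seq p _ r) ?undup_uniq //.
- rewrite sumrB exchange_big [X in _ - X]exchange_big /=.
  by congr (_ - _); apply: eq_bigr => i _; rewrite sum_delta ?undup_uniq.
- move=> H; rewrite mem_undup mem_cat => /orP[] /mapP[i _ ->].
    by exists (mu i / h i); rewrite divr_gt0.
  by exists (mu' i / h' i); rewrite divr_gt0.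
move=> H _; apply: contraNT => H_notin_r; rewrite /delta_divisor !big1 ?subr0 // => i _;
  by rewrite /delta asboolF // => HE; move: H_notin_r; rewrite HE ?in_r1 ?in_r2.
Qed.

Lemma divisor_fun_truncE N y : in_window_all N y -> divisor_fun y = divisor_fun_trunc N y.
Proof.
move=> [wi wj]; rewrite /divisor_fun /divisor_fun_trunc.
by congr (_ - _ - _); apply: eq_bigr => i _; apply: Theta_truncE.
Qed.

Lemma exists_in_window_all a b : 0 < a ->
  exists N, forall y, a <= y <= b -> in_window_all N y.
Proof.
move=> a_gt0; pose cs := [seq h i / mu i | i <- index_enum 'I_n]
                      ++ [seq h' j / mu' j | j <- index_enum 'I_m].
have [|N csN] := exists_window p_gt1 cs a b a_gt0.
  by move=> c; rewrite mem_cat => /orP[] /mapP[i _ ->]; rewrite divr_gt0.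
exists N => y yab; split => [i|j]; apply: csN yab; rewrite mem_cat; apply/orP.
  by left; apply/mapP; exists i; rewrite ?mem_index_enum.
by right; apply/mapP; exists j; rewrite ?mem_index_enum.
Qed.

Lemma divisor_fun_near_trunc l : 0 < l ->
  exists N, in_window_all N l /\ \forall y \near l, divisor_fun_trunc N y = divisor_fun y.
Proof.
move=> l_gt0; have [|N window_N] := exists_in_window_all (l / 2) (2 * l).
  by rewrite divr_gt0.
exists N; split; first by apply: window_N; apply/andP; split; lra.
near=> y; rewrite (divisor_fun_truncE N) //; apply: window_N.
have [lo hi] : l / 2 < y /\ y < 2 * l.
  by split; near: y; [apply: (cvgr_gt _ cvg_id) | apply: (cvgr_lt _ cvg_id)]; lra.
by apply/andP; split; lra.
Unshelve. all: by end_near.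
Qed.

Lemma continuous_divisor_fun_trunc N : continuous (divisor_fun_trunc N).
Proof.
move=> y; apply: cvgB; last by apply: cvgMr; exact: cvg_id.
by apply: cvgB; apply: continuous_sum => i; exact: continuous_Theta_trunc.
Qed.

Lemma continuous_divisor_fun l : 0 < l -> {for l, continuous divisor_fun}.
Proof.
move=> l_gt0; have [N [window_l near_l]] := divisor_fun_near_trunc _ l_gt0.
rewrite /prop_for /continuous_at (divisor_fun_truncE _ _ window_l).
by apply: cvg_trans (continuous_divisor_fun_trunc N l); exact: near_eq_cvg.
Qed.

Lemma has_order_at_divisor_fun_trunc N l : 0 < l -> in_window_all N l ->
  has_order_at (divisor_fun_trunc N) l (delta_divisor (scaleHp p l)).
Proof.
move=> l_gt0 [wi wj]; rewrite -[delta_divisor _]subr0.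
apply: has_order_atB; first by apply: has_order_atB; apply: has_order_at_sum => i;
  exact: has_order_at_Theta_trunc.
by apply: has_order_at_near (has_order_at_affine h0 0 l); near=> y; rewrite addr0.
Unshelve. all: by end_near.
Qed.

Lemma has_order_at_divisor_fun l : 0 < l ->
  has_order_at divisor_fun l (delta_divisor (scaleHp p l)).
Proof.
move=> l_gt0; have [N [window_l near_l]] := divisor_fun_near_trunc _ l_gt0.
apply: has_order_at_near (has_order_at_divisor_fun_trunc _ _ l_gt0 window_l).
by near=> y; rewrite (near near_l y).
Unshelve. all: by end_near.
Qed.

Lemma divisor_fun_mulp l : 0 < l ->
  (P - 1) * h0 = \sum_(i < n) h i - \sum_(j < m) h' j ->
  \sum_(i < n) mu i = \sum_(j < m) mu' j -> divisor_fun (P * l) = divisor_fun l.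
Proof.
move=> l_gt0 h0E muE; rewrite /divisor_fun.
under eq_bigr do rewrite Theta_mulp //.
under [X in _ - X - _ = _]eq_bigr do rewrite Theta_mulp //.
rewrite !big_split /= !sumrN -!mulr_suml muE.
have -> : \sum_(i < n) h i = (P - 1) * h0 + \sum_(j < m) h' j by rewrite h0E; ring.
ring.
Qed.

Hypotheses (hh : forall i, Hp p (h i)) (hh' : forall j, Hp p (h' j)) (h0h : Hp p h0).

Lemma affine_Hp_off_divisor_fun_trunc N a b :
  exists K, affine_Hp_off p (divisor_fun_trunc N) a b K.
Proof.
have [K1 off1] : exists K,
    affine_Hp_off p (fun y => \sum_(i < n) Theta_trunc p N (h i) (mu i) y) a b K.
  by apply: (affine_Hp_off_sum p_gt1) => i; exact: affine_Hp_off_Theta_trunc.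
have [K2 off2] : exists K,
    affine_Hp_off p (fun y => \sum_(j < m) Theta_trunc p N (h' j) (mu' j) y) a b K.
  by apply: (affine_Hp_off_sum p_gt1) => j; exact: affine_Hp_off_Theta_trunc.
have offh0 : affine_Hp_off p (fun y => h0 * y + 0) a b [::] by exact: affine_Hp_off_affine.
exists ((K1 ++ K2) ++ [::]).
apply: (affine_Hp_off_eq _ (affine_Hp_offB p_gt1 (affine_Hp_offB p_gt1 off1 off2) offh0)).
by move=> y _; rewrite addr0.
Qed.

Lemma pw_affine_Hp_divisor_fun : pw_affine_Hp p divisor_fun.
Proof.
move=> a b a_gt0 ab; have [N window_N] := exists_in_window_all a b a_gt0.
have [K truncK] := affine_Hp_off_divisor_fun_trunc N a b.
apply: (pw_affine_Hp_on_off p_gt1 ab); apply: (affine_Hp_off_eq _ truncK) => y yab.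
exact: divisor_fun_truncE (window_N y yab).
Qed.

End DivisorFunction.

Theorem proposition5p11 (R : realType) (p : nat) (pr_p : prime p)
  (n m : nat) (h mu : 'I_n -> R) (h' mu' : 'I_m -> R)
  (hh : forall i, Hp p (h i)) (hpos : forall i, 0 < h i) (mupos : forall i, 0 < mu i)
  (hh' : forall j, Hp p (h' j)) (hpos' : forall j, 0 < h' j)
  (mupos' : forall j, 0 < mu' j)
  (D Dp Dm : set R -> R)
  (Ddiv : is_divisor p D) (Dpdiv : is_divisor p Dp) (Dmdiv : is_divisor p Dm)
  (Dpeff : effective p Dp) (Dmeff : effective p Dm)
  (DE : forall H, D H = Dp H - Dm H)
  (DpE : forall H, Dp H = \sum_(i < n) delta p (h i) (mu i) H)
  (DmE : forall H, Dm H = \sum_(j < m) delta p (h' j) (mu' j) H)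
  (deg0 : deg p D = 0)
  (h0 : R) (h0Hp : Hp p h0)
  (h0E : (p%:R - 1) * h0 = \sum_(i < n) h i - \sum_(j < m) h' j) :
  let f := fun l : R => \sum_(i < n) Theta p (h i) (mu i) l
                        - \sum_(j < m) Theta p (h' j) (mu' j) l - h0 * l in
  [/\ (forall l : R, 0 < l -> {for l, continuous f}),
      pw_affine_Hp p f,
      (forall l : R, 0 < l -> f (p%:R * l) = f l) &
      (forall l : R, 0 < l -> has_order_at f l (D (scaleHp p l)))].
Proof.
move=> f; rewrite {}/f.
have DE' : D = delta_divisor p n m h mu h' mu'.
  by apply/funext => H; rewrite DE DpE DmE.
have muE : \sum_(i < n) mu i = \sum_(j < m) mu' j.
  by move: deg0; rewrite DE' deg_delta_divisor // => /eqP; rewrite subr_eq0 => /eqP.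
split.
- by move=> l l_gt0; apply: continuous_divisor_fun.
- exact: pw_affine_Hp_divisor_fun.
- by move=> l l_gt0; apply: divisor_fun_mulp.
- by move=> l l_gt0; rewrite DE'; apply: has_order_at_divisor_fun.
Qed.
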